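(* Assume $h_0$ satisfies Case I or Case II. Let $c_1>0$ be a constant such that $G(\beta,\gamma)\le c_1/\beta^3-F$ for all $\beta>0$, $\gamma\ge0$. Define $E_1(\beta,\gamma)=\frac12\gamma^2+F\beta$ and $E_2(\beta,\gamma)=\frac12\gamma^2+F\beta+\frac{c_1}{2\beta^2}$ for $\beta>0$, $\gamma\in\mathbb{R}$. Let $\eta$ be the solution of $\eta''=G(\eta,\eta')$, $\eta(0)=\eta_0>0$, $\eta'(0)=\eta_1$ on its maximal interval $[0,T[$. Then for every $t\in[0,T[$: (i) $\frac{d}{dt}E_1(\eta(t),\eta'(t))\le0$ if $\eta'(t)\le0$; (ii) $\frac{d}{dt}E_2(\eta(t),\eta'(t))\le0$ if $\eta'(t)\ge0$.
   Context: Let $\Omega\subset\mathbb{R}^2$ be a bounded open set with regular boundary and $0\in\Omega$. Let $h_0\in C^1(\bar\Omega)$ with $h_0\ge 0$ and $\min_{\Omega}h_0=h_0(0)=0$. Let $F>0$, $K=\{\varphi\in H^1_0(\Omega):\varphi\ge 0\}$. For $\beta>0$, $\gamma\in\mathbb{R}$, let $q\in K$ be the unique solution of $\int_\Omega (h_0+\beta)^3\nabla q\cdot\nabla(\varphi-q)\ge \int_\Omega h_0\,\partial_{x_1}(\varphi-q)-\gamma\int_\Omega(\varphi-q)$ for all $\varphi\in K$, and set $G(\beta,\gamma)=\int_\Omega q\,dx-F$ (such a constant $c_1$ exists). Case I (line contact): $h_0(0,x_2)=0$ whenever $(0,x_2)\in\Omega$, $h_0(x_1,x_2)>0$ for $x_1\neq0$,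 and there exist $\alpha\ge1$, a neighborhood $W$ of $0$ and a regular function $h_1>0$ on $\bar W$ with $h_0=|x_1|^\alpha h_1$ on $W$. Case II (point contact): $h_0(x)>0$ for $x\neq0$, and there exist $\alpha\ge1$, a neighborhood $W$ of $0$ and a regular $h_1>0$ on $\bar W$ with $h_0(x)=|x|^\alpha h_1(x)$ on $W$. *)

From mathcomp Require Import all_boot all_order all_algebra.
From mathcomp Require Import all_classical all_reals all_analysis.
Set Implicit Arguments. Unset Strict Implicit. Unset Printing Implicit Defensive.
Import Order.TTheory GRing.Theory Num.Theory numFieldNormedType.Exports.
Local Open Scope classical_set_scope.
Local Open Scope ring_scope.

Section Defs.
Variable R : realType.

Definition e1 : R * R := (1, 0).
Definition e2 : R * R := (0, 1).

Definition enorm (x : R * R) : R := Num.sqrt (x.1 ^+ 2 + x.2 ^+ 2).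

Definition leb2 := ((@lebesgue_measure R) \x (@lebesgue_measure R))%E.

Definition int2 (D : set (R * R)) (f : R * R -> R) : R := Rintegral leb2 D f.

Definition L2dist2 (D : set (R * R)) (f g : R * R -> R) : \bar R :=
  (\int[leb2]_(x in D) (((f x - g x) ^+ 2)%:E))%E.

Definition d1 (f : R * R -> R) (x : R * R) : R := 'D_e1 f x.
Definition d2 (f : R * R -> R) (x : R * R) : R := 'D_e2 f x.

Definition C1_plane (f : R * R -> R) : Prop :=
  (forall x, differentiable f x) /\ continuous (d1 f) /\ continuous (d2 f).

Definition C1_closure (D : set (R * R)) (f : R * R -> R) : Prop :=
  {within closure D, continuous f} /\
  (forall x, D x -> differentiable f x) /\
  exists g1 g2 : R * R -> R,
    {within closure D, continuous g1} /\ {within closure D, continuous g2} /\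
    (forall x, D x -> d1 f x = g1 x /\ d2 f x = g2 x).

Definition regular_bounded_open (D : set (R * R)) : Prop :=
  open D /\ (exists M : R, forall x, D x -> `|x.1| <= M /\ `|x.2| <= M) /\
  exists rho : R * R -> R, C1_plane rho /\
    D = [set x | rho x < 0] /\
    (forall x, rho x = 0 -> (d1 rho x, d2 rho x) <> (0, 0)).

Fixpoint iter_der (vs : seq (R * R)) (f : R * R -> R) : R * R -> R :=
  match vs with
  | [::] => f
  | v :: vs' => fun x => 'D_v (iter_der vs' f) x
  end.

Definition smooth (f : R * R -> R) : Prop :=
  forall vs x, differentiable (iter_der vs f) x.

Definition test_fun (D : set (R * R)) (f : R * R -> R) : Prop :=
  smooth f /\ exists C, compact C /\ C `<=` D /\ (forall x, ~ C x -> f x = 0).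

(* (phi, (g1, g2)) : phi belongs to H^1_0(D) = closure of C_c^infinity(D) in
   H^1(D), with (weak) gradient (g1, g2). *)
Definition H10 (D : set (R * R)) (phi g1 g2 : R * R -> R) : Prop :=
  measurable_fun D phi /\ measurable_fun D g1 /\ measurable_fun D g2 /\
  exists psi : nat -> R * R -> R,
    (forall n, test_fun D (psi n)) /\
    (L2dist2 D (psi n) phi @[n --> \oo] --> 0%E) /\
    (L2dist2 D (d1 (psi n)) g1 @[n --> \oo] --> 0%E) /\
    (L2dist2 D (d2 (psi n)) g2 @[n --> \oo] --> 0%E).

Definition Kcone (D : set (R * R)) (phi g1 g2 : R * R -> R) : Prop :=
  H10 D phi g1 g2 /\ forall x, D x -> 0 <= phi x.

Definition vi_solution (D : set (R * R)) (h0 : R * R -> R) (beta gamma : R)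
    (q q1 q2 : R * R -> R) : Prop :=
  Kcone D q q1 q2 /\
  forall phi g1 g2, Kcone D phi g1 g2 ->
    int2 D (fun x => (h0 x + beta) ^+ 3 *
                     (q1 x * (g1 x - q1 x) + q2 x * (g2 x - q2 x)))
    >= int2 D (fun x => h0 x * (g1 x - q1 x))
       - gamma * int2 D (fun x => phi x - q x).

Definition is_G (D : set (R * R)) (h0 : R * R -> R) (F : R)
    (G : R -> R -> R) : Prop :=
  forall beta gamma, 0 < beta ->
    exists q q1 q2, vi_solution D h0 beta gamma q q1 q2 /\
                    G beta gamma = int2 D q - F.

Definition standing (D : set (R * R)) (h0 : R * R -> R) : Prop :=
  regular_bounded_open D /\ D (0, 0) /\ C1_closure D h0 /\
  (forall x, closure D x -> 0 <= h0 x) /\ h0 (0, 0) = 0.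
(* (min_Omega h0 = h0(0) = 0 follows from the last three conjuncts) *)

Definition caseI (D : set (R * R)) (h0 : R * R -> R) : Prop :=
  (forall x2, D (0, x2) -> h0 (0, x2) = 0) /\
  (forall x, closure D x -> x.1 != 0 -> 0 < h0 x) /\
  exists (alpha : R) (W : set (R * R)) (h1 : R * R -> R),
    1 <= alpha /\ open W /\ W (0, 0) /\
    {within closure W, continuous h1} /\ (forall x, closure W x -> 0 < h1 x) /\
    (forall x, W x -> closure D x -> h0 x = `|x.1| `^ alpha * h1 x).

Definition caseII (D : set (R * R)) (h0 : R * R -> R) : Prop :=
  (forall x, closure D x -> x != (0, 0) -> 0 < h0 x) /\
  exists (alpha : R) (W : set (R * R)) (h1 : R * R -> R),
    1 <= alpha /\ open W /\ W (0, 0) /\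
    {within closure W, continuous h1} /\ (forall x, closure W x -> 0 < h1 x) /\
    (forall x, W x -> closure D x -> h0 x = enorm x `^ alpha * h1 x).

(* derivative of f at t relative to the interval I (one-sided at endpoints) *)
Definition deriv_within (I : set R) (f : R -> R) (t d : R) : Prop :=
  (f s - f t) / (s - t) @[s --> within (I `\ t) (nbhs t)] --> d.

Definition Iint (T : \bar R) : set R := [set t | 0 <= t /\ (t%:E < T)%E].

Definition ode_sol (G : R -> R -> R) (eta0 eta1 : R) (T : \bar R)
    (eta deta : R -> R) : Prop :=
  eta 0 = eta0 /\ deta 0 = eta1 /\
  (forall t, Iint T t -> 0 < eta t) /\
  (forall t, Iint T t -> deriv_within (Iint T) eta t (deta t)) /\
  (forall t, Iint T t -> deriv_within (Iint T) deta t (G (eta t) (deta t))).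

Definition maximal_sol (G : R -> R -> R) (eta0 eta1 : R) (T : \bar R)
    (eta deta : R -> R) : Prop :=
  ode_sol G eta0 eta1 T eta deta /\
  forall (T' : \bar R) (zeta dzeta : R -> R),
    ode_sol G eta0 eta1 T' zeta dzeta ->
    (forall t, Iint T t -> zeta t = eta t) -> (T' <= T)%E.

Definition E1 (F beta gamma : R) : R := gamma ^+ 2 / 2 + F * beta.
Definition E2 (F c1 beta gamma : R) : R :=
  gamma ^+ 2 / 2 + F * beta + c1 / (2 * beta ^+ 2).

End Defs.

From mathcomp Require Import all_boot all_order all_algebra.
From mathcomp Require Import ring.
From mathcomp Require Import all_classical all_reals all_analysis.
Import Order.TTheory GRing.Theory Num.Theory numFieldNormedType.Exports.
Local Open Scope classical_set_scope.
Local Open Scope ring_scope.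

(* Along a solution, d/dt E1 = eta' (eta'' + F) = eta' (G + F), and G + F is
   the integral of the nonnegative solution q of the variational inequality;
   likewise d/dt E2 = eta' (G + F - c1 / eta^3), which the assumed bound on G
   makes nonpositive when eta' >= 0. *)

Section deriv_within_rules.
Context {R : realType} {I : set R}.
Implicit Types (f g : R -> R) (t c d df dg : R).

Local Notation near_t t := (within (I `\ t) (nbhs t)).

Lemma near_within_setD1 t : \forall s \near near_t t, I s /\ s != t.
Proof.
near=> s; have [Is /eqP st] : (I `\ t) s by near: s; apply: withinT.
by [].
Unshelve. all: by end_near.
Qed.

Lemma deriv_within_cvg {f t d} : deriv_within I f t d -> f s @[s --> near_t t] --> f t.
Proof.
move=> fd.
have : f t + (f s - f t) / (s - t) * (s - t) @[s --> near_t t] --> f t + d * (t - t).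
  apply: cvgD; first exact: cvg_cst.
  apply: cvgM; first exact: fd.
  by apply: cvgB; [exact: cvg_within | exact: cvg_cst].
rewrite subrr mulr0 addr0; apply: cvg_trans; apply: near_eq_cvg.
near=> s; have [_ st] : I s /\ s != t by near: s; exact: near_within_setD1.
by rewrite divfK ?subr_eq0 // addrC subrK.
Unshelve. all: by end_near.
Qed.

Lemma deriv_within_cst c t : deriv_within I (fun=> c) t 0.
Proof.
rewrite /deriv_within; under eq_fun do rewrite subrr mul0r.
exact: cvg_cst.
Qed.

Lemma deriv_withinD {f g t df dg} : deriv_within I f t df -> deriv_within I g t dg ->
  deriv_within I (fun s => f s + g s) t (df + dg).
Proof.
move=> fd gd; rewrite /deriv_within.
under eq_fun do rewrite opprD addrACA mulrDl.
exact: cvgD.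
Qed.

Lemma deriv_withinM {f g t df dg} : deriv_within I f t df -> deriv_within I g t dg ->
  deriv_within I (fun s => f s * g s) t (f t * dg + g t * df).
Proof.
move=> fd gd; rewrite /deriv_within.
have -> : (fun s => (f s * g s - f t * g t) / (s - t)) =
    (fun s => f s * ((g s - g t) / (s - t)) + g t * ((f s - f t) / (s - t))).
  by apply/funext => s; ring.
by apply: cvgD; apply: cvgM => //; [exact: deriv_within_cvg fd | exact: cvg_cst].
Qed.

Lemma deriv_withinV {f t df} : deriv_within I f t df -> f t != 0 ->
  deriv_within I (fun s => (f s)^-1) t (- df / f t ^+ 2).
Proof.
move=> fd ft0; have fc := deriv_within_cvg fd.
have ftt0 : f t * f t != 0 by rewrite mulf_neq0.
have : - ((f s - f t) / (s - t)) * (f s * f t)^-1 @[s --> near_t t] -->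
       - df * (f t * f t)^-1.
  apply: cvgM; first exact: cvgN.
  by apply: cvgV ftt0 _; apply: cvgM fc _; exact: cvg_cst.
rewrite -expr2; apply: cvg_trans; apply: near_eq_cvg.
near=> s; have [_ st] : I s /\ s != t by near: s; exact: near_within_setD1.
have fs0 : f s != 0 by near: s; exact: cvgr_neq0 fc ft0.
by field; rewrite fs0 ft0 subr_eq0 st.
Unshelve. all: by end_near.
Qed.

End deriv_within_rules.

Section energy_derivatives.
Context {R : realType} {I : set R} {f g : R -> R} {t a : R}.
Hypotheses (fd : deriv_within I f t (g t)) (gd : deriv_within I g t a).

Lemma deriv_within_E1 F :
  deriv_within I (fun s => E1 F (f s) (g s)) t (g t * (a + F)).
Proof.
have -> : (fun s => E1 F (f s) (g s)) = fun s => g s * g s * 2^-1 + F * f s.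
  by apply/funext => s; rewrite /E1 expr2.
have := deriv_withinD (deriv_withinM (deriv_withinM gd gd) (deriv_within_cst 2^-1 t))
  (deriv_withinM (deriv_within_cst F t) fd).
by congr (deriv_within _ _ _ _); field.
Qed.

Lemma deriv_within_E2 F c : f t != 0 ->
  deriv_within I (fun s => E2 F c (f s) (g s)) t (g t * (a + F - c / f t ^+ 3)).
Proof.
move=> ft0.
have -> : (fun s => E2 F c (f s) (g s)) =
    fun s => E1 F (f s) (g s) + c * (2 * (f s * f s))^-1.
  by apply/funext => s; rewrite /E2 /E1 expr2.
have f2d := deriv_withinM (deriv_within_cst 2 t) (deriv_withinM fd fd).
have f2t0 : 2 * (f t * f t) != 0 by rewrite !mulf_neq0 ?pnatr_eq0.
have := deriv_withinD (deriv_within_E1 F)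
  (deriv_withinM (deriv_within_cst c t) (deriv_withinV f2d f2t0)).
by congr (deriv_within _ _ _ _); field.
Qed.

End energy_derivatives.

Lemma is_G_addF_ge0 {R : realType} {D : set (R * R)} {h0 : R * R -> R}
    {F : R} {G : R -> R -> R} :
  is_G D h0 F G -> forall beta gamma, 0 < beta -> 0 <= G beta gamma + F.
Proof.
move=> isG beta gamma beta0; have [q [q1 [q2 [[[_ q_ge0] _] ->]]]] := isG beta gamma beta0.
by rewrite subrK; apply: Rintegral_ge0.
Qed.

Theorem lemma4p1 (R : realType) (Omega : set (R * R)) (h0 : R * R -> R)
  (F : R) (G : R -> R -> R) (c1 eta0 eta1 : R) (T : \bar R)
  (eta deta : R -> R) :
  standing Omega h0 ->
  caseI Omega h0 \/ caseII Omega h0 ->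
  0 < F ->
  is_G Omega h0 F G ->
  0 < c1 ->
  (forall beta gamma, 0 < beta -> 0 <= gamma ->
     G beta gamma <= c1 / beta ^+ 3 - F) ->
  0 < eta0 ->
  maximal_sol G eta0 eta1 T eta deta ->
  forall t, Iint T t ->
    (deta t <= 0 -> exists d, deriv_within (Iint T)
        (fun s => E1 F (eta s) (deta s)) t d /\ d <= 0) /\
    (0 <= deta t -> exists d, deriv_within (Iint T)
        (fun s => E2 F c1 (eta s) (deta s)) t d /\ d <= 0).
Proof.
move=> _ _ _ isG _ G_le _ [[_ [_ [eta_gt0 [eta_d deta_d]]]] _] t It.
have eta_t0 := eta_gt0 t It.
have GF_ge0 := is_G_addF_ge0 isG _ (deta t) eta_t0.
split=> deta_sgn.
  exists (deta t * (G (eta t) (deta t) + F)).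
  split; first exact: deriv_within_E1 (eta_d t It) (deta_d t It) F.
  exact: mulr_le0_ge0.
exists (deta t * (G (eta t) (deta t) + F - c1 / eta t ^+ 3)); split.
  by apply: deriv_within_E2 (eta_d t It) (deta_d t It) _ _ _; rewrite gt_eqF.
by apply: mulr_ge0_le0 => //; rewrite subr_le0 -lerBrDr G_le.
Qed.
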